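(* For any $(u,z,\mathcal R,\dot{\mathcal R})$ (with $u\in L^2(B_1)$ radial and $z,\mathcal R,\dot{\mathcal R}\in\mathbb R$) satisfying the linearized constant-mass condition $\int_{B_1}u\,dx=-\frac{4\pi}3z-4\pi\frac{\rho_*}{R_*}\mathcal R$, the linearized total energy \[ \mathcal E^L_{\rm total}=-4\pi\sigma\mathcal R^2-4\pi R_gT_\infty R_*^2\mathcal Rz-\frac{2\pi R_gT_\infty R_*^3}{3\rho_*}z^2+\frac{c_v\gamma T_\infty R_*^3}{2\rho_*}\int_{B_1}u^2dx+2\pi\rho_lR_*^3\dot{\mathcal R}^2 \] satisfies \[ \mathcal E^L_{\rm total}\ge2\pi(4\sigma+3p_{\infty,*}R_* )\mathcal R^2+\frac{c_vT_\infty R_*^3}{2\rho_*}\int_{B_1}u^2dx+2\pi\rho_lR_*^3\dot{\mathcal R}^2. \]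
   Context: Parameters: $\gamma>1$, $c_v>0$, $R_g>0$ with $\gamma c_v=c_v+R_g$; $T_\infty>0$, $p_{\infty,*}>0$, $\sigma>0$, $\rho_l>0$; $\rho_*,R_*>0$ satisfy $R_gT_\infty\rho_*=p_{\infty,*}+2\sigma/R_*$. $B_1$ is the unit ball of $\mathbb R^3$. *)

From HB Require Import structures.
From mathcomp Require Import all_boot all_order all_algebra.
From mathcomp Require Import all_classical all_reals all_analysis.

Import Order.TTheory GRing.Theory Num.Theory.
Local Open Scope classical_set_scope.
Local Open Scope ring_scope.

Definition R3 (R : realType) := ((R * R) * R)%type.

Definition leb3 (R : realType) :=
  ((@lebesgue_measure R \x @lebesgue_measure R) \x @lebesgue_measure R)%E.

Definition sqnorm3 {R : realType} (x : R3 R) : R :=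
  x.1.1 ^+ 2 + x.1.2 ^+ 2 + x.2 ^+ 2.

Definition B1 (R : realType) : set (R3 R) := [set x | sqnorm3 x < 1].

Definition radial {R : realType} (u : R3 R -> R) : Prop :=
  forall x y : R3 R, sqnorm3 x = sqnorm3 y -> u x = u y.

Definition L2_B1 {R : realType} (u : R3 R -> R) : Prop :=
  measurable_fun (B1 R) u /\
  (leb3 R).-integrable (B1 R) (fun x => ((u x) ^+ 2)%:E).

From HB Require Import structures.
From mathcomp Require Import all_boot all_order all_algebra.
From mathcomp Require Import all_classical all_reals all_analysis.
From mathcomp Require Import measurable_realfun ring lra.
Import Order.TTheory GRing.Theory Num.Theory numFieldNormedType.Exports.
Local Open Scope classical_set_scope.
Local Open Scope ring_scope.

(* With the ideal gas law gamma c_v = c_v + R_g and the equilibrium relation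
   R_g T_inf rho_s = p_inf + 2 sigma / R_s, the energy minus the claimed lower
   bound equals R_g T_inf R_s^3 / (2 rho_s) times int u^2 - 3 M^2 / (4 pi),
   where M = int u is fixed by the mass constraint.  This is nonnegative by
   the Cauchy-Schwarz inequality M^2 <= |B_1| int u^2, with |B_1| = 4 pi / 3
   computed by Fubini from the areas pi (1 - x^2) of the disks slicing the
   ball. *)

Section mean_square.
Context {d : measure_display} {T : measurableType d} {R : realType}.
Variables (mu : {measure set T -> \bar R}) (D : set T) (m : R).
Hypotheses (mD : measurable D) (muD : mu D = m%:E).

Lemma integrable_cst_of_finite (k : R) : mu.-integrable D (EFin \o cst k).
Proof.
apply/integrableP; split; first exact/measurable_EFinP.
rewrite (eq_integral (cst `|k|%:E)) // integral_cst // muD.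
by rewrite -EFinM ltry.
Qed.

Lemma integrable_of_sqr (f : T -> R) : measurable_fun D f ->
  mu.-integrable D (fun x => (f x ^+ 2)%:E) -> mu.-integrable D (EFin \o f).
Proof.
move=> mf if2; apply: (le_integrable mD (g := EFin \o (fun x => 1 + f x ^+ 2))).
- exact/measurable_EFinP.
- move=> x _; rewrite lee_fin /= [`|1 + _|]ger0_norm ?addr_ge0 ?sqr_ge0 //.
  rewrite -(real_normK (num_real (f x))).
  by move: `|f x| => t; have := sqr_ge0 (t - 2^-1); nra.
- exact: (integrableD mD (integrable_cst_of_finite 1) if2).
Qed.

Hypothesis m_gt0 : 0 < m.

Lemma Rintegral_sqr_le (f : T -> R) : measurable_fun D f ->
  mu.-integrable D (fun x => (f x ^+ 2)%:E) ->
  (\int[mu]_(x in D) f x) ^+ 2 <= m * \int[mu]_(x in D) f x ^+ 2.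
Proof.
move=> mf if2; have iF := integrable_of_sqr _ mf if2.
set M := \int[mu]_(x in D) f x; pose c := M / m.
(* integrate (f - c)^2 >= 0, with c the mean of f over D *)
have iZ : mu.-integrable D (EFin \o (fun x => 2 * c * f x)).
  rewrite (_ : _ \o _ = (fun x => (2 * c)%:E * (f x)%:E)%E); last first.
    by apply/funext => x /=; rewrite EFinM.
  exact: integrableZl.
have iL : mu.-integrable D (EFin \o (fun x => 2 * c * f x - c ^+ 2)).
  exact: (integrableB mD iZ (integrable_cst_of_finite (c ^+ 2))).
have integral_affine_le : \int[mu]_(x in D) (2 * c * f x - c ^+ 2)
    <= \int[mu]_(x in D) f x ^+ 2.
  by apply: le_Rintegral => // x _; have := sqr_ge0 (f x - c); nra.
have integral_affineE : \int[mu]_(x in D) (2 * c * f x - c ^+ 2) = M ^+ 2 / m.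
  rewrite (RintegralB mD iZ (integrable_cst_of_finite (c ^+ 2))) (RintegralZl _ mD iF).
  rewrite (Rintegral_cst _ mD) muD -/M /c [fine _]/=.
  by field; rewrite gt_eqF.
by move: integral_affine_le; rewrite integral_affineE ler_pdivrMr // mulrC.
Qed.

End mean_square.

Lemma ltr_sqr_sqrt (R : rcfType) (a w : R) : (w ^+ 2 < a) = (`|w| < Num.sqrt a).
Proof.
have [a_le0|a_gt0] := lerP a 0.
  rewrite ler0_sqrtr // normr_lt0; apply/negbTE; rewrite -leNgt.
  exact: le_trans a_le0 (sqr_ge0 w).
by rewrite -ltr_sqrt // sqrtr_sqr.
Qed.

Section unit_ball_volume.
Variable R : realType.
Notation mu := (@lebesgue_measure R).

Lemma integral_itv_cos2 (a : R) :
  (\int[mu]_(t in `[(- (pi / 2))%R, (pi / 2)%R]) (2 * a * cos t ^+ 2)%:E)%E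
  = (pi * a)%:E.
Proof.
pose H : R -> R := a \*: (id + sin * cos).
have dH t : is_derive t (1 : R) H (2 * a * cos t ^+ 2).
  apply: is_derive_eq.
  rewrite -[LHS]/(a * (1 + (sin t * - sin t + cos t * cos t))).
  rewrite mulrN -[sin t * sin t]expr2 sin2cos2; ring.
have cH x : {for x, continuous H}.
  by apply/differentiable_continuous; rewrite -derivable1_diffP.
have pi_gt0 : (0 : R) < pi := pi_gt0 R.
rewrite (@continuous_FTC2 _ _ H); first last.
- by move=> x _; rewrite derive1E derive_val.
- by split; [move=> x _ | exact/cvg_at_right_filter/cH | exact/cvg_at_left_filter/cH].
- apply: derivable_within_continuous => x _.
  have -> : (fun t => 2 * a * cos t ^+ 2) = (2 * a) \*: (@cos R ^+ 2).
    by apply/funext.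
  exact: ex_derive.
- lra.
rewrite -EFinB; congr EFin.
rewrite -[H _]/(a * (pi / 2 + sin (pi / 2) * cos (pi / 2))).
rewrite -[H _]/(a * (- (pi / 2) + sin (- (pi / 2)) * cos (- (pi / 2)))).
by rewrite sinN cosN sin_pihalf cos_pihalf; lra.
Qed.

Lemma integral_itv_chord (a : R) : 0 < a ->
  (\int[mu]_(y in `[(- Num.sqrt a)%R, (Num.sqrt a)%R])
     (2 * Num.sqrt (a - y ^+ 2))%:E)%E = (pi * a)%:E.
Proof.
move=> a_gt0; set r := Num.sqrt a.
have r_gt0 : 0 < r by rewrite sqrtr_gt0.
have r2 : r ^+ 2 = a by rewrite sqr_sqrtr // ltW.
pose F : R -> R := r \*: (@sin R).
have dF t : is_derive t (1 : R) F (r * cos t) by apply: is_derive_eq.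
have F'E : derive1 F = r \*: (@cos R).
  by apply/funext => t; rewrite derive1E derive_val.
have cF' x : {for x, continuous (derive1 F)}.
  by rewrite F'E; apply/differentiable_continuous; rewrite -derivable1_diffP.
have cF x : {for x, continuous F}.
  by apply/differentiable_continuous; rewrite -derivable1_diffP.
have cP y : {for y, continuous (cst a - id * id : R -> R)}.
  by apply/differentiable_continuous; rewrite -derivable1_diffP.
have cG : continuous (fun y : R => 2 * Num.sqrt (a - y ^+ 2)).
  move=> y; rewrite (_ : (fun y => _) = cst 2 \* (Num.sqrt \o (cst a - id * id))) //.
  apply: continuousM; first exact: cst_continuous.
  exact: continuous_comp (cP y) (@sqrt_continuous R _).
have pi_gt0 : (0 : R) < pi := pi_gt0 R.
have <- : F (- (pi / 2)) = - r.
  by rewrite -[LHS]/(r * sin (- (pi / 2))) sinN sin_pihalf mulrN1.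
have <- : F (pi / 2) = r.
  by rewrite -[LHS]/(r * sin (pi / 2)) sin_pihalf mulr1.
rewrite (@integration_by_substitution_increasing _ F); first last.
- exact: continuous_subspaceT.
- by split; [move=> x _ | exact/cvg_at_right_filter/cF | exact/cvg_at_left_filter/cF].
- by apply/cvg_ex; eexists; exact/cvg_at_left_filter/cF'.
- by apply/cvg_ex; eexists; exact/cvg_at_right_filter/cF'.
- by move=> x _; exact: cF'.
- move=> x y xI yI xy.
  by rewrite -[F x]/(r * sin x) -[F y]/(r * sin y) ltr_pM2l // ltr_sin.
- lra.
rewrite -(integral_itv_cos2 a); apply: eq_integral => x xI.
rewrite F'E; congr EFin.
rewrite -[LHS]/(2 * Num.sqrt (a - (r * sin x) ^+ 2) * (r * cos x)).
have cos_ge0 : 0 <= cos x.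
  by apply: cos_ge0_pihalf; move: xI; rewrite inE /= in_itv.
have -> : a - (r * sin x) ^+ 2 = (r * cos x) ^+ 2.
  by rewrite !exprMn r2 sin2cos2; ring.
rewrite sqrtr_sqr ger0_norm; last exact: mulr_ge0 (ltW r_gt0) cos_ge0.
by rewrite -r2; ring.
Qed.

(* Num.sqrt vanishes on negative numbers, hence the max. *)
Lemma integral_chord (a : R) :
  (\int[mu]_y (2 * Num.sqrt (a - y ^+ 2))%:E)%E = (pi * Num.max a 0)%:E.
Proof.
have [a_le0|a_gt0] := lerP a 0.
  rewrite mulr0; apply: integral0_eq => y _ /=.
  by rewrite ler0_sqrtr ?mulr0 // subr_le0 (le_trans a_le0) ?sqr_ge0.
rewrite -(integral_itv_chord _ a_gt0) [RHS]integral_mkcond.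
apply: eq_integral => y _; rewrite patchE; case: ifPn => //.
rewrite notin_setE /= in_itv /= => /negP.
rewrite -ler_norml -sqrtr_sqr ler_sqrt ?(ltW a_gt0) // -ltNge => a_lt.
by rewrite ler0_sqrtr ?mulr0 // subr_le0 ltW.
Qed.

Lemma integral_ball_slice_area :
  (\int[mu]_x (pi * Num.max (1 - x ^+ 2) 0)%:E)%E = (4 * pi / 3)%:E.
Proof.
have pi_gt0 : (0 : R) < pi := pi_gt0 R.
transitivity (\int[mu]_(x in `[(-1)%R, 1%R]) (pi * (1 - x ^+ 2))%:E)%E.
  rewrite [RHS]integral_mkcond; apply: eq_integral => x _.
  rewrite patchE -(real_normK (num_real x)); case: ifPn.
    rewrite inE /= in_itv /= -ler_norml => x_le1.
    by rewrite max_l // subr_ge0 expr_le1.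
  rewrite notin_setE /= in_itv /= => /negP; rewrite -ler_norml -ltNge => x_gt1.
  by rewrite max_r ?mulr0 // subr_le0 ltW // expr_gt1.
pose K : R -> R := pi \*: (id - 3^-1 \*: (id * id * id)).
have dK t : is_derive t (1 : R) K (pi * (1 - t ^+ 2)).
  apply: is_derive_eq.
  rewrite -[LHS]/(pi * (1 - 3^-1 * ((t * t) * 1 + t * (t * 1 + t * 1)))).
  by rewrite expr2; field.
have cK x : {for x, continuous K}.
  by apply/differentiable_continuous; rewrite -derivable1_diffP.
rewrite (@continuous_FTC2 _ _ K); first last.
- by move=> x _; rewrite derive1E derive_val.
- by split; [move=> x _ | exact/cvg_at_right_filter/cK | exact/cvg_at_left_filter/cK].
- apply: derivable_within_continuous => x _.
  suff : derivable (pi \*: (cst 1 - id * id) : R -> R) x 1 by [].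
  exact: ex_derive.
- lra.
rewrite -EFinB; congr EFin.
rewrite -[K 1]/(pi * (1 - 3^-1 * (1 * 1 * 1))).
by rewrite -[K (-1)]/(pi * (-1 - 3^-1 * ((-1) * (-1) * (-1)))); field.
Qed.

Lemma xsection_B1 (p : R * R) :
  xsection (B1 R) p = `](- Num.sqrt (1 - p.1 ^+ 2 - p.2 ^+ 2)),
                        (Num.sqrt (1 - p.1 ^+ 2 - p.2 ^+ 2))[%classic.
Proof.
apply/seteqP; split => w /=; rewrite /xsection /B1 /sqnorm3 /= in_itv /= ?inE /=;
  rewrite -ltr_norml -ltr_sqr_sqrt; lra.
Qed.

Lemma measurable_sqnorm3 : measurable_fun setT (@sqnorm3 R).
Proof.
apply: measurable_funD; first apply: measurable_funD.
- by apply: measurable_funX; apply: measurableT_comp => //; apply: measurableT_comp.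
- by apply: measurable_funX; apply: measurableT_comp => //; apply: measurableT_comp.
- by apply: measurable_funX; exact: measurable_snd.
Qed.

Lemma measurable_B1 : measurable (B1 R).
Proof.
have := measurable_sqnorm3 measurableT _ (measurable_itv `]-oo, 1[).
by rewrite setTI; congr measurable; apply/seteqP; split => x; rewrite /= in_itv.
Qed.

Lemma measure_B1 : leb3 R (B1 R) = (4 * pi / 3)%:E.
Proof.
transitivity (\int[(mu \x mu)%E]_p (2 * Num.sqrt (1 - p.1 ^+ 2 - p.2 ^+ 2))%:E)%E.
  rewrite [LHS]/(\int[(mu \x mu)%E]_p mu (xsection (B1 R) p))%E.
  apply: eq_integral => p _; rewrite xsection_B1 lebesgue_measure_itv /= lte_fin.
  case: ifPn => [_|]; first by rewrite -EFinD opprK -mulr2n mulr_natl.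
  rewrite -subr_gt0 opprK -mulr2n pmulrn_lgt0 // sqrtr_gt0 -leNgt => /ler0_sqrtr ->.
  by rewrite mulr0.
rewrite fubini_tonelli1; last 2 first.
- apply/measurable_EFinP; apply: measurable_funM => //.
  apply: measurableT_comp; first exact: continuous_measurable_fun (@sqrt_continuous R).
  by apply: measurable_funB; first apply: measurable_funB => //; exact: measurable_funX.
- by move=> p /=; rewrite lee_fin mulr_ge0 ?sqrtr_ge0.
rewrite -integral_ball_slice_area; apply: eq_integral => x _.
by rewrite /fubini_F -integral_chord; apply: eq_integral.
Qed.

End unit_ball_volume.

Lemma linearized_energy_gap (F : numFieldType)
    (gamma c_v R_g T_inf p_inf sigma rho_l rho_s R_s pi z Rc Rdot I : F) :
  c_v != 0 -> rho_s != 0 -> R_s != 0 -> pi != 0 ->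
  gamma * c_v = c_v + R_g -> R_g * T_inf * rho_s = p_inf + 2 * sigma / R_s ->
  (- 4 * pi * sigma * Rc ^+ 2
    - 4 * pi * R_g * T_inf * R_s ^+ 2 * Rc * z
    - (2 * pi * R_g * T_inf * R_s ^+ 3) / (3 * rho_s) * z ^+ 2
    + (c_v * gamma * T_inf * R_s ^+ 3) / (2 * rho_s) * I
    + 2 * pi * rho_l * R_s ^+ 3 * Rdot ^+ 2)
  - (2 * pi * (4 * sigma + 3 * p_inf * R_s) * Rc ^+ 2
    + (c_v * T_inf * R_s ^+ 3) / (2 * rho_s) * I
    + 2 * pi * rho_l * R_s ^+ 3 * Rdot ^+ 2)
  = R_g * T_inf * R_s ^+ 3 / (2 * rho_s)
    * (I - 3 * (- (4 * pi / 3) * z - 4 * pi * (rho_s / R_s) * Rc) ^+ 2 / (4 * pi)).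
Proof.
move=> cv_neq0 rhos_neq0 Rs_neq0 pi_neq0 gas eq_state.
have -> : gamma = (c_v + R_g) / c_v by rewrite -gas mulfK.
have -> : p_inf = R_g * T_inf * rho_s - 2 * sigma / R_s by rewrite eq_state addrK.
by field; apply/and4P.
Qed.

Theorem proposition3p5 (R : realType)
  (gamma c_v R_g T_inf p_inf sigma rho_l rho_s R_s : R)
  (Hgamma : 1 < gamma) (Hcv : 0 < c_v) (HRg : 0 < R_g)
  (Hgas : gamma * c_v = c_v + R_g)
  (HT : 0 < T_inf) (Hp : 0 < p_inf) (Hsigma : 0 < sigma) (Hrhol : 0 < rho_l)
  (Hrhos : 0 < rho_s) (HRs : 0 < R_s)
  (Heq : R_g * T_inf * rho_s = p_inf + 2 * sigma / R_s)
  (u : R3 R -> R) (z Rc Rdot : R)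
  (HuL2 : L2_B1 u) (Hurad : radial u)
  (Hmass : Rintegral (leb3 R) (B1 R) u
           = - (4 * pi / 3) * z - 4 * pi * (rho_s / R_s) * Rc) :
  let E := - 4 * pi * sigma * Rc ^+ 2
           - 4 * pi * R_g * T_inf * R_s ^+ 2 * Rc * z
           - (2 * pi * R_g * T_inf * R_s ^+ 3) / (3 * rho_s) * z ^+ 2
           + (c_v * gamma * T_inf * R_s ^+ 3) / (2 * rho_s)
             * Rintegral (leb3 R) (B1 R) (fun x => u x ^+ 2)
           + 2 * pi * rho_l * R_s ^+ 3 * Rdot ^+ 2 in
  2 * pi * (4 * sigma + 3 * p_inf * R_s) * Rc ^+ 2
    + (c_v * T_inf * R_s ^+ 3) / (2 * rho_s)
      * Rintegral (leb3 R) (B1 R) (fun x => u x ^+ 2)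
    + 2 * pi * rho_l * R_s ^+ 3 * Rdot ^+ 2 <= E.
Proof.
cbv zeta; rewrite -subr_ge0.
have pi_gt0 := pi_gt0 R.
rewrite linearized_energy_gap ?gt_eqF // -Hmass.
apply: mulr_ge0; first by rewrite ltW // divr_gt0 ?mulr_gt0 ?exprn_gt0.
have [mu_u iu2] := HuL2.
have vol_gt0 : 0 < 4 * pi / 3 :> R by rewrite divr_gt0 ?mulr_gt0.
have := Rintegral_sqr_le (leb3 R) (B1 R) _
  (measurable_B1 R) (measure_B1 R) vol_gt0 u mu_u iu2.
by rewrite subr_ge0 ler_pdivrMr ?mulr_gt0 //; lra.
Qed.
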